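(* Let $Alg$ be a classical Cholesky decomposition algorithm for $n{\times}n$ matrices implemented on a machine with a constant number $d$ of memory levels of sizes $M_1\le\cdots\le M_d$, inverse bandwidths $\beta_1\le\cdots\le\beta_d$ and latencies $\alpha_1\le\cdots\le\alpha_d$. Then the bandwidth cost of $Alg$ is $$\Omega\!\left(\sum_{i=1}^{d-1}\beta_i\left(\frac{n^3}{\sqrt{M_i}}-M_i\right)\right)$$ and the latency cost of $Alg$ is $$\Omega\!\left(\sum_{i=1}^{d-1}\alpha_i\,\frac{n^3}{M_i^{3/2}}\right).$$
   Context: The Cholesky decomposition of a real symmetric positive definite matrix $A$ is $A = LL^T$ with $L$ lower triangular; its entries satisfy $L(i,i)=\sqrt{A(i,i)-\sum_{k=1}^{i-1}L(i,k)^2}$ and $L(i,j)=\frac{1}{L(j,j)}\big(A(i,j)-\sum_{k=1}^{j-1}L(i,k)L(j,k)\big)$ for $i>j$. A ''classical'' Cholesky algorithm performs exactly these arithmetic operations, possibly reordered using only associativity and commutativity of addition (no pivoting, no distributivity). Hierarchical memory model: a sequential machine with $d$ levels of memory, level $i$ of size $M_i$ words; moving a message of $w$ contiguous words between level $i$ and the next slower level costs $\alpha_i+\beta_i w$. The input matrix initially resides in the slowest level. Bandwidth cost here is the sum over levels of $\beta_i$ times the number of words moved across that level boundary, and latency cost the sum over levels of $\alpha_i$ times the number of messages moved across that boundary. *)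

From Stdlib Require Import Reals.
From HB Require Import structures.
From mathcomp Require Import all_boot.

Set Implicit Arguments.
Unset Strict Implicit.
Unset Printing Implicit Defensive.

(** * Values (words) that a classical Cholesky algorithm on an n x n matrix
    can hold in memory.  Indices are 0-based: i, j, k : 'I_n.
    - [Lval i j]   : the output entry L(i,j) (j <= i).
    - [Sval i j s] : a partial sum of the summands of
          A(i,j) - sum_{k<j} L(i,k) L(j,k)
      selected by [s]: [None] stands for the summand A(i,j) and [Some k]
      for the summand - L(i,k) L(j,k).  Since only associativity and
      commutativity of addition may be used, a partial sum is determined
      (as a value) by the set of summands it contains.  In particular
      [Sval i j [set None]] is the input entry A(i,j) and
      [Sval i j [set Some k]] is the product L(i,k) L(j,k). *)
Inductive val (n : nat) : Type :=
| Lval of 'I_n & 'I_n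
| Sval of 'I_n & 'I_n & {set option 'I_n}.

Definition val_enc n (v : val n) :
  ('I_n * 'I_n) + ('I_n * 'I_n * {set option 'I_n}) :=
  match v with Lval i j => inl (i, j) | Sval i j s => inr (i, j, s) end.
Definition val_dec n (x : ('I_n * 'I_n) + ('I_n * 'I_n * {set option 'I_n})) : val n :=
  match x with inl (i, j) => Lval i j | inr (i, j, s) => Sval i j s end.
Lemma val_encK n : cancel (@val_enc n) (@val_dec n).
Proof. by case. Qed.
HB.instance Definition _ n := Finite.copy (val n) (can_type (@val_encK n)).

Definition summands n (j : 'I_n) : {set option 'I_n} :=
  None |: [set Some k | k : 'I_n & (k < j)%N].

(** Memory levels are numbered 0 (fastest) to d-1
    (slowest); "boundary l" is between level l and level l+1.
    - [Fetch l w]  : one message copying the words [w] from level l+1 to level l;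
    - [Store l w] : one message copying the words [w] from level l to level l+1;
    - [Discard l w] : free the words [w] of level l (no cost);
    - arithmetic happens in the fastest level 0:
      [Mul i j k]   : compute L(i,k) * L(j,k)  (k < j <= i);
      [Add i j s1 s2] : add two disjoint partial sums of entry (i,j);
      [Fin i j]     : from the complete sum compute L(i,j), by a square root
                      if i = j, by division by L(j,j) if i > j. *)
Inductive event (n : nat) : Type :=
| Fetch of nat & {set val n}
| Store of nat & {set val n}
| Discard of nat & {set val n}
| Mul of 'I_n & 'I_n & 'I_n
| Add of 'I_n & 'I_n & {set option 'I_n} & {set option 'I_n}
| Fin of 'I_n & 'I_n.

Definition mstate n := nat -> {set val n}.

Definition upd n (s : mstate n) (l : nat) (X : {set val n}) : mstate n :=
  fun l' => if l' == l then X else s l'.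

Definition step n (d : nat) (s : mstate n) (e : event n) : option (mstate n) :=
  match e with
  | Fetch l w =>
      if (l.+1 < d) && (w \subset s l.+1) then Some (upd s l (s l :|: w)) else None
  | Store l w =>
      if (l.+1 < d) && (w \subset s l) then Some (upd s l.+1 (s l.+1 :|: w)) else None
  | Discard l w =>
      if l < d then Some (upd s l (s l :\: w)) else None
  | Mul i j k =>
      if [&& k < j, j <= i, Lval i k \in s 0 & Lval j k \in s 0]
      then Some (upd s 0 (Sval i j [set Some k] |: s 0)) else None
  | Add i j s1 s2 =>
      if [&& Sval i j s1 \in s 0, Sval i j s2 \in s 0 & [disjoint s1 & s2]]
      then Some (upd s 0 (Sval i j (s1 :|: s2) |: s 0)) else None
  | Fin i j =>
      if [&& j <= i, Sval i j (summands j) \in s 0 & (i == j) || (Lval j j \in s 0)]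
      then Some (upd s 0 (Lval i j |: s 0)) else None
  end.

Definition fits n (d : nat) (M : nat -> nat) (s : mstate n) : bool :=
  [forall l : 'I_d, #|s l| <= M l].

Fixpoint exec n (d : nat) (M : nat -> nat) (s : mstate n) (tr : seq (event n)) : bool :=
  match tr with
  | [::] => true
  | e :: tr' =>
      match step d s e with
      | Some s' => fits d M s' && exec d M s' tr'
      | None => false
      end
  end.

(** Initially the (lower triangle of the symmetric) input matrix A is in the
    slowest level d-1, all other levels are empty. *)
Definition init n (d : nat) : mstate n :=
  fun l => if l == d.-1
           then [set Sval ij.1 ij.2 [set None] | ij : 'I_n * 'I_n & (ij.2 <= ij.1)%N]
           else set0.

Definition is_mul n (i j k : 'I_n) (e : event n) : bool :=
  if e is Mul i' j' k' then [&& i' == i, j' == j & k' == k] else false.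
Definition is_add n (i j : 'I_n) (e : event n) : bool :=
  if e is Add i' j' _ _ then (i' == i) && (j' == j) else false.
Definition is_fin n (i j : 'I_n) (e : event n) : bool :=
  if e is Fin i' j' then (i' == i) && (j' == j) else false.

(** A classical Cholesky algorithm for n x n matrices on the machine
    (d levels of sizes M 0, ..., M (d-1)): a legal execution from the initial
    state that performs exactly the arithmetic operations of the Cholesky
    formulas (each multiplication and each sqrt/division once, and exactly j
    additions to form the sum of the j+1 summands of entry (i,j)), with the
    sums possibly reordered by associativity/commutativity. *)
Definition classical_cholesky n (d : nat) (M : nat -> nat) (tr : seq (event n)) : Prop :=
  [/\ fits d M (init n d), exec d M (init n d) tr,
      forall i j k : 'I_n, count (is_mul i j k) tr = ((k < j) && (j <= i) : nat),
      forall i j : 'I_n, count (is_add i j) tr = (if (j <= i)%N then nat_of_ord j else 0%N)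
    & forall i j : 'I_n, count (is_fin i j) tr = ((j <= i)%N : nat)].

Definition msg_words n (l : nat) (e : event n) : nat :=
  match e with
  | Fetch l' w | Store l' w => if l' == l then #|w| else 0
  | _ => 0
  end.
Definition is_msg n (l : nat) (e : event n) : bool :=
  match e with
  | Fetch l' _ | Store l' _ => l' == l
  | _ => false
  end.

Definition sumR (m : nat) (f : nat -> R) : R :=
  foldr (fun l acc => Rplus (f l) acc) R0 (iota 0 m).

Definition bandwidth_cost n (d : nat) (beta : nat -> R) (tr : seq (event n)) : R :=
  sumR d.-1 (fun l => Rmult (beta l) (INR (sumn (map (msg_words l) tr)))).
Definition latency_cost n (d : nat) (alpha : nat -> R) (tr : seq (event n)) : R :=
  sumR d.-1 (fun l => Rmult (alpha l) (INR (count (is_msg l) tr))).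

(* Fix the boundary l between levels l and l+1; the levels 0..l hold at most K = d M_l
   words.  Cut the execution into segments, each moving between K and 2K words across the
   boundary.  The operands L(i,k), L(j,k) of a multiplication performed in a segment descend
   from input entries that were in the fast levels at the start of the segment or were fetched
   during it; the partial sum of entry (i,j) that absorbs the product is finished during the
   segment, lies in the fast levels at its end, or was stored during it.  So each of the three
   projections of the segment's set of multiplications (i,j,k) has O(K) elements, and a
   Loomis-Whitney type count bounds a segment by O(K^2 / sqrt M_l) multiplications.  As at
   least (n/3)^3 multiplications occur and at least (n/3)^2 input entries must be fetched, the
   number W of words crossing the boundary satisfies n^3 = O(d^2 sqrt M_l W); both bounds
   follow, since a message carries at most M_l words. *)

From Pilot Require Import Defs.
From Stdlib Require Import Reals Lra.
From mathcomp Require Import all_boot zify.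

Set Implicit Arguments.
Unset Strict Implicit.
Unset Printing Implicit Defensive.

Lemma count_gt0_nth (T : Type) (x0 : T) (p : pred T) (s : seq T) :
  0 < count p s -> exists2 t, t < size s & p (nth x0 s t).
Proof. by rewrite -has_count => /(has_nthP x0). Qed.

Lemma count_le1_nth_inj (T : Type) (x0 : T) (p : pred T) (s : seq T) t1 t2 :
  count p s <= 1 -> t1 < size s -> t2 < size s ->
  p (nth x0 s t1) -> p (nth x0 s t2) -> t1 = t2.
Proof.
move=> p_le1.
wlog lt12 : t1 t2 / t1 < t2.
  move=> W s1 s2 p1 p2; case: (ltngtP t1 t2) => [lt12|lt21|//].
    exact: W.
  by symmetry; apply: W.
move=> _ s2 p1 p2; move: p_le1; rewrite -(cat_take_drop t2 s) count_cat.
have : 0 < count p (take t2 s).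
  by rewrite -has_count; apply/(has_nthP x0); exists t1; rewrite ?size_take ?s2 ?nth_take.
have : 0 < count p (drop t2 s).
  rewrite -has_count; apply/(has_nthP x0); exists 0; last by rewrite nth_drop addn0.
  by rewrite size_drop subn_gt0.
lia.
Qed.

Lemma leq_card_bigcup (I : Type) (T : finType) (r : seq I) (P : pred I) (F : I -> {set T}) :
  #|\bigcup_(i <- r | P i) F i| <= \sum_(i <- r | P i) #|F i|.
Proof.
elim/big_ind2: _ => [|A m B k Am Bk|//]; first by rewrite cards0.
exact: leq_trans (leq_card_setU _ _) (leq_add Am Bk).
Qed.

Lemma bigcup_nat_telescope (T : finType) (S F : nat -> {set T}) a b : a <= b ->
  (forall u, a <= u < b -> S u.+1 \subset S u :|: F u) ->
  S b \subset S a :|: \bigcup_(a <= u < b) F u.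
Proof.
elim: b => [|b IH]; first by rewrite leqn0 => /eqP<- _; rewrite big_geq ?subsetUl.
rewrite leq_eqVlt ltnS => /orP[/eqP<- _|ab S_step]; first by rewrite big_geq ?subsetUl.
rewrite big_nat_recr //= setUA; apply: subset_trans (S_step b _) _; first by rewrite ab /=.
by apply: setSU; apply: IH => // u /andP[au ub]; rewrite S_step // au ltnW.
Qed.

Lemma leq_card_triples (I : finType) (T : {set I * (I * I)}) (A B C : {set I * I}) h :
  (forall i j k, (i, (j, k)) \in T -> [/\ (i, j) \in A, (i, k) \in B & (j, k) \in C]) ->
  #|T| * h <= #|A| * h * h + #|B| * #|C|.
Proof.
(* For each i, the fibre of T over i lies both in A_i x B_i and in C. *)
move=> proj.
have fibers (J : finType) (S : {set I * J}) : #|S| = \sum_i #|[set y | (i, y) \in S]|.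
  rewrite (eq_bigr (fun i => \sum_y (if (i, y) \in S then 1 else 0))) => [|i _].
    by rewrite pair_bigA /= -sum1_card big_mkcond /=; apply: eq_bigr => -[].
  by rewrite -sum1_card big_mkcond /=; apply: eq_bigr => y _; rewrite inE.
rewrite (fibers _ T) (fibers _ A) (fibers _ B) !big_distrl -big_split /=; apply: leq_sum => i _.
set Ti := [set _ | _ \in T]; set Ai := [set _ | _ \in A]; set Bi := [set _ | _ \in B].
have TiAB : #|Ti| <= #|Ai| * #|Bi|.
  rewrite -cardsX; apply/subset_leq_card/subsetP => -[j k].
  by rewrite !inE => /proj[-> -> _].
have TiC : #|Ti| <= #|C|.
  by apply/subset_leq_card/subsetP => -[j k]; rewrite !inE => /proj[_ _ ->].
case: (ltnP #|Bi| h) => [/ltnW Bh|hB].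
  apply: leq_trans (leq_addr _ _); apply: leq_mul => //.
  by apply: leq_trans TiAB _; rewrite leq_mul2l Bh orbT.
by apply: leq_trans (leq_addl _ _); rewrite mulnC leq_mul.
Qed.

Definition ord_offset n m c (cmn : c + m <= n) (p : 'I_m) : 'I_n :=
  Ordinal (leq_trans (etrans (ltn_add2l c p m) (ltn_ord p)) cmn).

Lemma card_lower_pairs n : (n %/ 3) ^ 2 <= #|[set x : 'I_n * 'I_n | x.2 <= x.1]|.
Proof.
set m := n %/ 3; have m3 : m * 3 <= n by apply: leq_divM.
have le1 : m + m <= n by lia.
have le0 : 0 + m <= n by lia.
pose f (x : 'I_m * 'I_m) := (ord_offset le1 x.1, ord_offset le0 x.2).
have f_inj : injective f by move=> [p q] [p' q'] [/addnI/val_inj-> /addnI/val_inj->].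
have -> : m ^ 2 = #|f @: [set: 'I_m * 'I_m]|.
  by rewrite card_imset // cardsT card_prod card_ord.
apply/subset_leq_card/subsetP => _ /imsetP[[p q] _ ->]; rewrite inE /=.
by rewrite (leq_trans (ltnW (ltn_ord q))) ?leq_addr.
Qed.

Lemma card_lower_triples n :
  (n %/ 3) ^ 3 <= #|[set x : 'I_n * ('I_n * 'I_n) | x.2.2 < x.2.1 <= x.1]|.
Proof.
set m := n %/ 3; have m3 : m * 3 <= n by apply: leq_divM.
have le2 : (m + m) + m <= n by lia.
have le1 : m + m <= n by lia.
have le0 : 0 + m <= n by lia.
pose f (x : 'I_m * ('I_m * 'I_m)) :=
  (ord_offset le2 x.1, (ord_offset le1 x.2.1, ord_offset le0 x.2.2)).
have f_inj : injective f.
  by move=> [p [q r]] [p' [q' r']] [/addnI/val_inj-> /addnI/val_inj-> /addnI/val_inj->].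
have -> : m ^ 3 = #|f @: [set: 'I_m * ('I_m * 'I_m)]|.
  by rewrite card_imset // cardsT !card_prod card_ord.
apply/subset_leq_card/subsetP => _ /imsetP[[p [q r]] _ ->]; rewrite inE /=.
rewrite (leq_trans (ltn_ord r)) ?leq_addr //= -addnA leq_add2l.
by rewrite (leq_trans (ltnW (ltn_ord q))) ?leq_addr.
Qed.

Lemma cube_le_split x h W p q r : x ^ 3 <= p * h * W + q * h ^ 3 -> x ^ 2 <= r * W ->
  x ^ 3 <= 2 * (p + q * r) * h * W.
Proof.
(* Either x < 2qh, so that x^3 <= 2qh x^2, or the term q h^3 is at most x^3 / 2. *)
move=> split_x sq_x; case: (ltnP x (2 * q * h)) => [small|large].
  have : x ^ 3 <= 2 * q * h * (r * W) by rewrite expnS leq_mul // ltnW.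
  nia.
have : 2 * q * h ^ 3 <= x ^ 3.
  apply: leq_trans (_ : (2 * q * h) ^ 3 <= _); last by rewrite leq_exp2r.
  have q3 : q <= q ^ 3 by case: q {large split_x} => // q; rewrite -{1}(expn1 q.+1) leq_pexp2l.
  by rewrite !expnMn leq_mul // leq_mul.
nia.
Qed.

Section Machine.
Variables (n d : nat) (M : nat -> nat).
Implicit Types (s : mstate n) (e : event n) (v : Defs.val n) (tr : seq (event n)).

Definition fetched (l : nat) e : {set Defs.val n} :=
  if e is Fetch l' w then (if l' == l then w else set0) else set0.
Definition stored (l : nat) e : {set Defs.val n} :=
  if e is Store l' w then (if l' == l then w else set0) else set0.

Definition result e : option (Defs.val n) :=
  match e with
  | Mul i j k => Some (Sval i j [set Some k])
  | Add i j s1 s2 => Some (Sval i j (s1 :|: s2))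
  | Fin i j => Some (Lval i j)
  | _ => None
  end.

Definition operands e : {set Defs.val n} :=
  match e with
  | Mul i j k => [set Lval i k; Lval j k]
  | Add i j s1 s2 => [set Sval i j s1; Sval i j s2]
  | Fin i j => Sval i j (summands j) |: (if i == j then set0 else [set Lval j j])
  | _ => set0
  end.

Lemma step_origin s s' e v t : step d s e = Some s' -> v \in s' t ->
  [\/ v \in s t,
      [&& t.+1 < d, v \in fetched t e & v \in s t.+1],
      exists2 t', t = t'.+1 & [&& t < d, v \in stored t' e & v \in s t']
    | (t == 0) && (result e == Some v)].
Proof.
move=> + vt; case: e => [l w|l w|l w|i j k|i j s1 s2|i j] /=;
  case: ifP => // cond [E]; subst s'; move: vt; rewrite /upd;
  (case: eqP => [->|_]; last by constructor 1).
- rewrite inE eqxx => /orP[|vw]; first by constructor 1.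
  case/andP: cond => ld /subsetP/(_ v vw) vl.
  by constructor 2; rewrite ld vw vl.
- rewrite inE => /orP[|vw]; first by constructor 1.
  case/andP: cond => ld /subsetP/(_ v vw) vl.
  by constructor 3; exists l; rewrite // ld eqxx vw vl.
- by rewrite inE => /andP[_ vl]; constructor 1.
- by rewrite in_setU1 => /orP[/eqP->|]; [apply: Or44; rewrite eqxx|constructor 1].
- by rewrite in_setU1 => /orP[/eqP->|]; [apply: Or44; rewrite eqxx|constructor 1].
- by rewrite in_setU1 => /orP[/eqP->|]; [apply: Or44; rewrite eqxx|constructor 1].
Qed.

Lemma step_operands s s' e : step d s e = Some s' -> operands e \subset s 0.
Proof.
case: e => [l w|l w|l w|i j k|i j s1 s2|i j] //=; case: ifP => // cond _;
  apply/subsetP => v; rewrite ?inE //.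
- by case/and4P: cond => _ _ ik jk /orP[] /eqP->.
- by case/and3P: cond => s1in s2in _ /orP[] /eqP->.
- case/and3P: cond => _ sum jj /orP[/eqP->//|].
  by case: (i =P j) jj => [_ _|_ /= jj]; rewrite inE // => /eqP->.
Qed.

Definition entry v : 'I_n * 'I_n := match v with Lval i j | Sval i j _ => (i, j) end.
(* [Lval i j] is computed from the complete sum of entry (i,j), so it carries all its summands. *)
Definition summands_of v : {set option 'I_n} :=
  match v with Lval _ j => summands j | Sval _ _ x => x end.
Definition depends_on_input v : bool := None \in summands_of v.

Lemma None_in_summands (j : 'I_n) : None \in summands j.
Proof. by rewrite /summands in_setU1 eqxx. Qed.

Lemma result_summand s s' e v c :
  step d s e = Some s' -> result e = Some v -> c \in summands_of v ->
  (forall k, c = Some k -> ~~ is_mul (entry v).1 (entry v).2 k e) ->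
  exists2 u, u \in s 0 & (entry u == entry v) && (c \in summands_of u).
Proof.
move=> st res cv not_mul; have /subsetP sub0 := step_operands st.
case: e st res cv sub0 not_mul => // [i j k|i j s1 s2|i j] _ [<-] cv sub0 /=.
- by move: cv; rewrite inE => /eqP-> /(_ k erefl); rewrite !eqxx.
- move: cv; rewrite inE => /orP[c1|c2] _.
    by exists (Sval i j s1); rewrite ?sub0 ?inE ?eqxx.
  by exists (Sval i j s2); rewrite ?sub0 ?inE ?eqxx ?orbT.
- move=> _; exists (Sval i j (summands j)); first by rewrite sub0 // in_setU1 eqxx.
  by rewrite /= eqxx.
Qed.

Definition fast_mem (l : nat) s : {set Defs.val n} := \bigcup_(t < l.+1) s t.
Definition slow_mem (l : nat) s : {set Defs.val n} := \bigcup_(t < d | l < t) s t.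

Lemma fast_memP l s v : reflect (exists2 t, t <= l & v \in s t) (v \in fast_mem l s).
Proof.
apply: (iffP bigcupP) => [[t _ vt]|[t tl vt]]; first by exists t; rewrite // -ltnS.
by exists (Ordinal (tl : t < l.+1)).
Qed.

Lemma slow_memP l s v :
  reflect (exists t, [/\ t < d, l < t & v \in s t]) (v \in slow_mem l s).
Proof.
apply: (iffP bigcupP) => [[t lt vt]|[t [td lt vt]]]; first by exists t.
by exists (Ordinal td).
Qed.

Lemma card_fast_mem l s : l < d -> fits d M s ->
  {in [pred t | t < d] &, {homo M : t u / t <= u}} -> #|fast_mem l s| <= l.+1 * M l.
Proof.
move=> ld /forallP fit mono; apply: leq_trans (leq_card_bigcup _ _ _) _.
apply: leq_trans (_ : \sum_(t < l.+1) M l <= _); last by rewrite sum_nat_const card_ord.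
apply: leq_sum => t _.
have td : t < d by apply: leq_ltn_trans ld; rewrite -ltnS.
by apply: leq_trans (fit (Ordinal td)) _; apply: mono; rewrite //= -ltnS.
Qed.

Definition input_entries (l : nat) s : {set 'I_n * 'I_n} :=
  [set entry v | v in fast_mem l s & depends_on_input v].

Lemma card_input_entries l s : #|input_entries l s| <= #|fast_mem l s|.
Proof.
apply: leq_trans (leq_imset_card _ _) (subset_leq_card _).
by apply/subsetP => v; rewrite inE => /andP[].
Qed.

Lemma fast_mem_init l : l.+1 < d -> fast_mem l (init n d) = set0.
Proof.
move=> ld; apply/setP => v; rewrite inE; apply/fast_memP => -[t tl].
by rewrite /init; case: eqP => [tE|_]; [lia | rewrite inE].
Qed.

Lemma input_entries_step l s s' e : step d s e = Some s' ->
  input_entries l s' \subset input_entries l s :|: entry @: fetched l e.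
Proof.
move=> st; apply/subsetP => _ /imsetP[v + ->]; rewrite inE => /andP[/fast_memP[t tl vt] dep].
have old t' : t' <= l -> v \in s t' -> entry v \in input_entries l s :|: entry @: fetched l e.
  move=> t'l vt'; rewrite inE; apply/orP; left; apply: imset_f; rewrite inE dep andbT.
  by apply/fast_memP; exists t'.
case: (step_origin st vt) =>
  [|/and3P[_ vw vt1]|[t' tE /and3P[_ _ vt']]|/andP[/eqP t0 /eqP res]].
- exact: old.
- move: tl; rewrite leq_eqVlt => /orP[/eqP tl|]; last by move=> tl; exact: old vt1.
  by subst l; rewrite inE; apply/orP; right; apply: imset_f.
- by apply: old vt'; apply: ltnW; rewrite -tE.
- have [|u u0 /andP[/eqP uv du]] := result_summand st res dep; first by [].
  rewrite -uv inE; apply/orP; left; apply: imset_f; rewrite inE /depends_on_input du andbT.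
  by apply/fast_memP; exists 0.
Qed.

Lemma slow_mem_step l s s' e : step d s e = Some s' ->
  slow_mem l s' \subset slow_mem l s :|: stored l e.
Proof.
move=> st; apply/subsetP => v /slow_memP[t [td lt vt]].
have old t' : t' < d -> l < t' -> v \in s t' -> v \in slow_mem l s :|: stored l e.
  by move=> t'd lt' vt'; rewrite inE; apply/orP; left; apply/slow_memP; exists t'.
case: (step_origin st vt) =>
  [|/and3P[td1 _ vt1]|[t' tE /and3P[_ vw vt']]|/andP[/eqP t0 _]].
- exact: old.
- exact: old (ltnW (leq_ltn_trans lt _)) vt1.
- move: lt; rewrite tE ltnS leq_eqVlt => /orP[/eqP lt'|lt'].
    by rewrite inE lt' vw orbT.
  by apply: old vt'; rewrite // (ltn_trans _ td) ?tE.
- by move: lt; rewrite t0.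
Qed.

Definition holds_product s (i j k : 'I_n) : bool :=
  [exists t : 'I_d, [exists v in s t, (entry v == (i, j)) && (Some k \in summands_of v)]].

Lemma holds_product_init i j k : ~~ holds_product (init n d) i j k.
Proof.
apply/existsP => -[t /existsP[v /andP[]]]; rewrite /init; case: eqP => _; last by rewrite inE.
by case/imsetP => ij _ -> /andP[_]; rewrite inE.
Qed.

Lemma holds_product_step s s' e i j k : step d s e = Some s' -> ~~ is_mul i j k e ->
  holds_product s' i j k -> holds_product s i j k.
Proof.
move=> st not_mul /existsP[t /existsP[v /and3P[vt /eqP ev kv]]].
have found t' v' : t' < d -> v' \in s t' -> entry v' = (i, j) -> Some k \in summands_of v' ->
    holds_product s i j k.
  move=> t'd vt' ev' kv'; apply/existsP; exists (Ordinal t'd); apply/existsP; exists v'.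
  by rewrite vt' ev' eqxx kv'.
case: (step_origin st vt) =>
  [|/and3P[td _ vt1]|[t' tE /and3P[td _ vt']]|/andP[_ /eqP res]].
- by move=> vs; apply: (found t v).
- exact: (found t.+1 v).
- by apply: (found t') vt' ev kv; rewrite (ltn_trans _ td) // tE.
- have [|u u0 /andP[/eqP eu ku]] := result_summand st res kv.
    by move=> k' [<-]; rewrite ev.
  by apply: (found 0 u) u0 _ ku; rewrite ?eu // (leq_ltn_trans _ (ltn_ord t)).
Qed.

Definition step_or_stay s e : mstate n := if step d s e is Some s' then s' else s.
Definition run s tr (t : nat) : mstate n := foldl step_or_stay s (take t tr).
Definition event_at tr (t : nat) : event n := nth (Discard 0 set0) tr t.

Lemma exec_run s tr t : exec d M s tr -> t < size tr ->
  step d (run s tr t) (event_at tr t) = Some (run s tr t.+1) /\ fits d M (run s tr t.+1).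
Proof.
elim: tr s t => [//|e tr IH] s t /=.
case E: (step d s e) => [s'|//] /andP[fits' ex'].
case: t => [|t] /= lt_t; first by rewrite /run /event_at /= take0 /= /step_or_stay E.
by have := IH s' t ex' lt_t; rewrite /run /event_at /= /step_or_stay E.
Qed.

End Machine.

Arguments entry {n} v.

Section Trace.
Variables (n d : nat) (M : nat -> nat) (tr : seq (event n)).
Hypothesis exec_tr : exec d M (init n d) tr.

Definition state (t : nat) : mstate n := run d (init n d) tr t.

Lemma state_step t : t < size tr -> step d (state t) (event_at tr t) = Some (state t.+1).
Proof. by move=> lt_t; have [] := exec_run exec_tr lt_t. Qed.

Lemma state_fits t : fits d M (init n d) -> t <= size tr -> fits d M (state t).
Proof.
case: t => [|t] fits0 le_t; first by rewrite /state /run take0.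
by have [] := exec_run exec_tr le_t.
Qed.

Definition fetched_entries (l a b : nat) : {set 'I_n * 'I_n} :=
  \bigcup_(a <= u < b) entry @: fetched l (event_at tr u).
Definition stored_words (l a b : nat) : {set Defs.val n} :=
  \bigcup_(a <= u < b) stored l (event_at tr u).

Lemma input_entries_run l a b : a <= b -> b <= size tr ->
  input_entries l (state b) \subset input_entries l (state a) :|: fetched_entries l a b.
Proof.
move=> ab b_le; apply: (@bigcup_nat_telescope _ (fun t => input_entries l (state t))) ab _.
move=> u /andP[_ ub]; exact: input_entries_step (state_step (leq_trans ub b_le)).
Qed.

Lemma slow_mem_run l a b : a <= b -> b <= size tr ->
  slow_mem d l (state b) \subset slow_mem d l (state a) :|: stored_words l a b.
Proof.
move=> ab b_le; apply: (@bigcup_nat_telescope _ (fun t => slow_mem d l (state t))) ab _.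
move=> u /andP[_ ub]; exact: slow_mem_step (state_step (leq_trans ub b_le)).
Qed.

Lemma holds_product_run i j k a b : a <= b -> b <= size tr ->
  (forall u, a <= u < b -> ~~ is_mul i j k (event_at tr u)) ->
  holds_product d (state b) i j k -> holds_product d (state a) i j k.
Proof.
elim: b => [|b IH]; first by rewrite leqn0 => /eqP->.
rewrite leq_eqVlt ltnS => /orP[/eqP->//|ab] b_le no_mul hb.
apply: (IH ab (ltnW b_le)) => [u /andP[au ub]|]; first by rewrite no_mul // au ltnW.
by apply: holds_product_step (state_step b_le) _ hb; apply: no_mul; rewrite ab /=.
Qed.

Lemma mul_before i j k t : t <= size tr -> holds_product d (state t) i j k ->
  exists2 u, u < t & is_mul i j k (event_at tr u).
Proof.
move=> t_le hp.
case: (boolP [exists u : 'I_t, is_mul i j k (event_at tr u)]) => [/existsP[u mu]|].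
  by exists u.
move=> /existsPn none.
have := holds_product_run (leq0n t) t_le (fun u ut => none (Ordinal (proj2 (andP ut)))) hp.
by rewrite /state /run take0 /= (negbTE (holds_product_init _ _ _ _)).
Qed.

Lemma msg_words_le l u : fits d M (init n d) -> l < d -> u < size tr ->
  msg_words l (event_at tr u) <= M l.
Proof.
move=> fits0 ld lt_u; have /forallP fits_u := state_fits fits0 (ltnW lt_u).
have /forallP fits_u1 := state_fits fits0 lt_u; have st := state_step lt_u.
move: st; case: (event_at tr u) => //= l' w; case: eqP => [->|]; try by case: ifP.
- case: ifP => // /andP[_ _] [E]; have := fits_u1 (Ordinal ld).
  by rewrite -E /upd /= eqxx; apply: leq_trans; rewrite subset_leq_card ?subsetUr.
- case: ifP => // /andP[_ sub] _; apply: leq_trans (fits_u (Ordinal ld)).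
  exact: subset_leq_card.
Qed.

Lemma pending_product_entry l i j k a b : a <= b -> b <= size tr ->
  holds_product d (state b) i j k -> ~~ holds_product d (state a) i j k ->
  (i, j) \in entry @: fast_mem l (state b) :|: entry @: stored_words l a b.
Proof.
move=> ab b_le /existsP[t /existsP[v /and3P[vt /eqP ev kv]]] not_a; rewrite -ev inE.
case: (leqP t l) => [tl|lt]; first by rewrite imset_f //; apply/fast_memP; exists t.
have : v \in slow_mem d l (state b) by apply/slow_memP; exists t.
move/(subsetP (slow_mem_run l ab b_le)); rewrite inE => /orP[/slow_memP[t' [t'd _ vt']]|vs].
  case/negP: not_a; apply/existsP; exists (Ordinal t'd); apply/existsP; exists v.
  by rewrite vt' ev eqxx kv.
by apply/orP; right; apply: imset_f.
Qed.

End Trace.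

Section Cholesky.
Variables (n d : nat) (M : nat -> nat) (tr : seq (event n)).
Hypothesis chol : classical_cholesky d M tr.

Let exec_tr : exec d M (init n d) tr. Proof. by case: chol. Qed.

Local Notation state := (state d tr).
Local Notation ev := (event_at tr).

Lemma mul_unique i j k u1 u2 : u1 < size tr -> u2 < size tr ->
  is_mul i j k (ev u1) -> is_mul i j k (ev u2) -> u1 = u2.
Proof. by case: chol => _ _ cnt _ _; apply: count_le1_nth_inj; rewrite cnt; case: (_ && _). Qed.

Lemma mul_lower i j k u : u < size tr -> is_mul i j k (ev u) -> k < j <= i.
Proof.
case: chol => _ _ cnt _ _ lt_u mu; apply/negPn/negP => not_lower.
have : 0 < count (is_mul i j k) tr.
  by rewrite -has_count; apply/(has_nthP (Discard 0 set0)); exists u.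
by rewrite cnt (negbTE not_lower).
Qed.

Lemma fin_exists (i j : 'I_n) : j <= i -> exists2 t, t < size tr & ev t = Fin i j.
Proof.
case: chol => _ _ _ _ cnt ji.
have [|t lt_t fin] := @count_gt0_nth _ (Discard 0 set0) (is_fin i j) tr; first by rewrite cnt ji.
exists t => //; move: fin; rewrite /event_at.
by case: (nth _ tr t) => // i' j' /andP[/eqP-> /eqP->].
Qed.

Definition mults (a b : nat) : {set 'I_n * ('I_n * 'I_n)} :=
  [set x | [exists u : 'I_(size tr), (a <= u < b) && is_mul x.1 x.2.1 x.2.2 (ev u)]].

Lemma card_mults_total : (n %/ 3) ^ 3 <= #|mults 0 (size tr)|.
Proof.
apply: leq_trans (card_lower_triples n) _; apply/subset_leq_card/subsetP => -[i [j k]].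
rewrite !inE /= => lower.
have [|u lt_u mu] := @count_gt0_nth _ (Discard 0 set0) (is_mul i j k) tr.
  by case: chol => _ _ -> _ _; rewrite lower.
by apply/existsP; exists (Ordinal lt_u); rewrite /= lt_u mu.
Qed.

Lemma fin_summands t (i j : 'I_n) : t < size tr -> ev t = Fin i j ->
  Sval i j (summands j) \in state t 0.
Proof.
move=> lt_t fin; have /subsetP := step_operands (state_step exec_tr lt_t).
by rewrite fin; apply; rewrite !inE eqxx.
Qed.

Lemma mults_cat a b c : #|mults a c| <= #|mults a b| + #|mults b c|.
Proof.
apply/(leq_trans _ (leq_card_setU _ _))/subset_leq_card/subsetP => x.
rewrite !inE => /existsP[u /andP[/andP[au uc] mu]].
by case: (ltnP u b) => [ub|bu]; apply/orP; [left|right];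
  apply/existsP; exists u; rewrite ?au ?bu ?ub ?uc mu.
Qed.

Variable l : nat.
Hypothesis ld : l.+1 < d.

Definition operand_entries (a b : nat) : {set 'I_n * 'I_n} :=
  input_entries l (state a) :|: fetched_entries tr l a b.
Definition sum_entries (a b : nat) : {set 'I_n * 'I_n} :=
  operand_entries a b :|: entry @: fast_mem l (state b) :|: entry @: stored_words tr l a b.

Lemma operand_entries_mem a t b v : a <= t <= b -> b <= size tr -> v \in state t 0 ->
  depends_on_input v -> entry v \in operand_entries a b.
Proof.
move=> /andP[a_t t_b] b_le vt dep.
have : entry v \in input_entries l (state t).
  by apply: imset_f; rewrite inE dep andbT; apply/fast_memP; exists 0.
move/(subsetP (input_entries_run exec_tr l a_t (leq_trans t_b b_le))).
rewrite /operand_entries /fetched_entries (big_cat_nat a_t t_b) /= setUA.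
by move=> vin; apply: (subsetP (subsetUl _ _)).
Qed.

Definition words (a b : nat) : nat := \sum_(a <= u < b) msg_words l (ev u).

Lemma card_fetched_stored a b :
  #|fetched_entries tr l a b| + #|stored_words tr l a b| <= words a b.
Proof.
apply: leq_trans (leq_add (leq_card_bigcup _ _ _) (leq_card_bigcup _ _ _)) _.
rewrite -big_split; apply: leq_sum => u _ /=.
apply: leq_trans (leq_add (leq_imset_card _ _) (leqnn _)) _.
by case: (ev u) => [l' w|l' w|l' w|???|????|??] /=;
  rewrite ?cards0 //; case: eqP; rewrite ?cards0 ?addn0.
Qed.

Lemma card_lower_words : (n %/ 3) ^ 2 <= words 0 (size tr).
Proof.
apply: leq_trans (card_lower_pairs n) _; apply: leq_trans (card_fetched_stored 0 (size tr)).
apply: leq_trans (leq_addr _ _); apply/subset_leq_card/subsetP => -[i j]; rewrite inE /= => ji.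
have [t lt_t fin] := fin_exists ji.
have := operand_entries_mem (a := 0) (t := t) _ (leqnn _) (fin_summands lt_t fin).
rewrite /= ltnW // => /(_ isT (None_in_summands j)); rewrite inE => /orP[|//].
by case/imsetP => v; rewrite inE /state /run take0 /= fast_mem_init // inE.
Qed.

Lemma mults_operand_entries a b i j k : a <= b -> b <= size tr ->
  (i, (j, k)) \in mults a b -> (i, k) \in operand_entries a b /\ (j, k) \in operand_entries a b.
Proof.
move=> ab b_le; rewrite inE => /existsP[[u lt_u] /= /andP[/andP[au ub] mu]].
have := step_operands (state_step exec_tr lt_u); move: mu.
case: (ev u) => // i' j' k' /and3P[/eqP-> /eqP-> /eqP->] /subsetP sub.
have mem p q : Lval p q \in [set Lval i k; Lval j k] -> (p, q) \in operand_entries a b.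
  move=> vin; apply: (operand_entries_mem (t := u) (v := Lval p q)) (sub _ vin) _ => //.
    by rewrite au ltnW.
  exact: None_in_summands.
by split; apply: mem; rewrite !inE eqxx ?orbT.
Qed.

Lemma mults_sum_entries a b i j k : a <= b -> b <= size tr ->
  (i, (j, k)) \in mults a b -> (i, j) \in sum_entries a b.
Proof.
move=> ab b_le; rewrite inE => /existsP[[u lt_u] /= /andP[/andP[au ub] mu]].
have /andP[kj ji] := mul_lower lt_u mu.
have before t : t <= size tr -> holds_product d (state t) i j k -> u < t.
  move=> t_le /(mul_before exec_tr t_le)[u' u't mu'].
  by rewrite (mul_unique lt_u (leq_trans u't t_le) mu mu').
have [t2 lt_t2 fin] := fin_exists ji.
have sum_t2 := fin_summands lt_t2 fin.
have hp_t2 : holds_product d (state t2) i j k.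
  apply/existsP; exists (Ordinal (ltn_trans (ltn0Sn l) ld)).
  apply/existsP; exists (Sval i j (summands j)).
  by rewrite sum_t2 eqxx /= /summands !inE; apply/imsetP; exists k; rewrite ?inE.
have ut2 := before _ (ltnW lt_t2) hp_t2.
case: (ltnP t2 b) => [t2b|bt2].
  have a_t2 : a <= t2 <= b by rewrite (leq_trans au (ltnW ut2)) ltnW.
  have op := operand_entries_mem a_t2 b_le sum_t2 (None_in_summands j).
  by apply: (subsetP _ _ op); rewrite /sum_entries -setUA subsetUl.
have hp_b : holds_product d (state b) i j k.
  apply: (holds_product_run exec_tr bt2 (ltnW lt_t2) _ hp_t2) => t /andP[bt tt2].
  apply/negP => mt; move: (mul_unique lt_u (ltn_trans tt2 lt_t2) mu mt) ub => ->.
  by rewrite ltnNge bt.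
have not_a : ~~ holds_product d (state a) i j k.
  by apply/negP => /(before _ (leq_trans ab b_le)); rewrite ltnNge au.
apply: (subsetP _ _ (pending_product_entry exec_tr l ab b_le hp_b not_a)).
by rewrite /sum_entries -setUA subsetUr.
Qed.

Section SegmentBound.
Variables (K h : nat).
Hypothesis K_gt0 : 0 < K.
Hypothesis fast_cap : forall t, t <= size tr -> #|fast_mem l (state t)| <= K.
Hypothesis msg_cap : forall u, u < size tr -> msg_words l (ev u) <= K.
Hypothesis h2_le_K : h * h <= K.

Lemma mults_segment_bound a b : a <= b -> b <= size tr -> words a b <= 2 * K ->
  #|mults a b| * h <= 13 * K ^ 2.
Proof.
move=> ab b_le wK; have io := card_fetched_stored a b.
have in_a := leq_trans (card_input_entries _ _) (fast_cap (leq_trans ab b_le)).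
have fast_b := leq_trans (leq_imset_card entry _) (fast_cap b_le).
have op : #|operand_entries a b| <= 3 * K.
  by apply: leq_trans (leq_card_setU _ _) _; lia.
have sm : #|sum_entries a b| <= 4 * K.
  apply: leq_trans (leq_card_setU _ _) _.
  apply: leq_trans (leq_add (leq_card_setU _ _) (leq_imset_card _ _)) _.
  apply: leq_trans (leq_add (leq_add (leq_card_setU _ _) fast_b) (leqnn _)) _.
  by move: io; set F := #|fetched_entries _ _ _ _|; set S := #|stored_words _ _ _ _|; lia.
have proj i j k : (i, (j, k)) \in mults a b -> [/\ (i, j) \in sum_entries a b,
    (i, k) \in operand_entries a b & (j, k) \in operand_entries a b].
  move=> x; have [ik jk] := mults_operand_entries ab b_le x.
  by split => //; exact: mults_sum_entries x.
apply: leq_trans (leq_card_triples h proj) _.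
rewrite -mulnA; apply: leq_trans (leq_add (leq_mul sm h2_le_K) (leq_mul op op)) _; nia.
Qed.

Lemma mults_suffix_bound a : a <= size tr ->
  #|mults a (size tr)| * h <= 13 * K * (words a (size tr) + K).
Proof.
move=> a_le; have [m] := ubnP (size tr - a); elim: m a a_le => // m IH a a_le lt_m.
case: (leqP (words a (size tr)) (2 * K)) => [small|large].
  apply: leq_trans (mults_segment_bound a_le (leqnn _) small) _.
  by rewrite expnS expn1 mulnA leq_mul2l leq_addl orbT.
(* Split off the shortest segment moving at least K words; it moves at most 2K. *)
have exK : exists b, K <= words a b by exists (size tr); lia.
case: (ex_minnP exK) => b Kb min_b.
have b_le : b <= size tr by apply: min_b; lia.
have ab : a < b.
  by rewrite ltnNge; apply: contraL Kb => ba; rewrite /words big_geq // -ltnNge.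
have wb : words a b <= 2 * K.
  have w_pred : words a b.-1 < K.
    by rewrite ltnNge; apply/negP => /min_b; rewrite -ltnS prednK ?ltnn // (leq_ltn_trans _ ab).
  have b1 : b.-1 < size tr by rewrite prednK ?(leq_ltn_trans _ ab).
  have ab1 : a <= b.-1 by rewrite -ltnS prednK ?(leq_ltn_trans _ ab).
  have := msg_cap b1; move: w_pred.
  by rewrite /words -{3}(prednK (leq_ltn_trans (leq0n a) ab)) big_nat_recr //=; lia.
have seg := mults_segment_bound (ltnW ab) b_le wb.
have rest : #|mults b (size tr)| * h <= 13 * K * (words b (size tr) + K).
  by apply: IH => //; lia.
have := mults_cat a b (size tr); rewrite /words (big_cat_nat (ltnW ab) b_le) /=.
rewrite -/(words a b) -/(words b (size tr)); move: rest seg Kb.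
set Wb := words a b; set Wr := words b _; set T := #|mults a (size tr)|.
set Tb := #|mults a b|; set Tr := #|mults b _|; nia.
Qed.

End SegmentBound.

End Cholesky.

Lemma level_arith n m h d K W : 0 < h -> 0 < d -> n <= 5 * m -> m ^ 2 <= W ->
  K <= 4 * d * h ^ 2 -> m ^ 3 * h <= 13 * K * (W + K) -> n ^ 3 <= 125 * (520 * d ^ 2) * h * W.
Proof.
move=> h0 d0 nm sq KH cube.
have m3_split : m ^ 3 <= 52 * d * h * W + 208 * d ^ 2 * h ^ 3.
  rewrite -(leq_pmul2r h0); apply: leq_trans cube _.
  apply: (@leq_trans (13 * (4 * d * h ^ 2) * (W + 4 * d * h ^ 2))).
    by rewrite leq_mul // ?leq_add2l ?leq_mul2l ?KH ?orbT.
  rewrite !expnS !expn0; nia.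
have sq1 : m ^ 2 <= 1 * W by rewrite mul1n.
have m3 := cube_le_split m3_split sq1.
have n3 : n ^ 3 <= 125 * m ^ 3 by rewrite -[125]/(5 ^ 3) -expnMn leq_exp2r.
apply: leq_trans n3 _; rewrite -!mulnA leq_mul2l !mulnA; apply/orP; right.
apply: leq_trans m3 _; apply: leq_mul => //; apply: leq_mul => //.
rewrite !expnS !expn0; nia.
Qed.

Lemma sumn_msg_words n (tr : seq (event n)) l :
  sumn (map (msg_words l) tr) = words tr l 0 (size tr).
Proof. by rewrite sumnE big_map (big_nth (Discard 0 set0)). Qed.

Lemma words_le_messages n d M (tr : seq (event n)) l :
  exec d M (init n d) tr -> fits d M (init n d) -> l < d ->
  words tr l 0 (size tr) <= M l * count (is_msg l) tr.
Proof.
move=> exec_tr fits0 ld.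
have -> : count (is_msg l) tr = \sum_(0 <= u < size tr) is_msg l (event_at tr u).
  by rewrite -sumn_count sumnE big_map (big_nth (Discard 0 set0)).
rewrite big_distrr /words [X in _ <= X]big_nat_cond big_nat_cond.
apply: leq_sum => u /andP[/andP[_ lt_u] _].
have := msg_words_le exec_tr fits0 ld lt_u.
by case: (event_at tr u) => //= l' w; case: (l' == l); rewrite ?muln1.
Qed.

Lemma level_words_bound n d M (tr : seq (event n)) l :
  classical_cholesky d M tr -> l.+1 < d ->
  {in [pred t | t < d] &, {homo M : t u / t <= u}} -> 0 < M l -> 3 <= n ->
  n ^ 3 <= 125 * (520 * d ^ 2) * Nat.sqrt (M l) * words tr l 0 (size tr).
Proof.
move=> chol ld mono Ml_gt0 n_ge3; have [fits0 exec_tr _ _ _] := chol.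
set h := Nat.sqrt (M l); set K := d * M l.
have [hh Mh] : h * h <= M l /\ M l < h.+1 * h.+1.
  by have [/leP ? /ltP ?] := Nat.sqrt_spec (M l) (Nat.le_0_l _).
have h_gt0 : 0 < h by case: h hh Mh => //; lia.
have d_gt0 : 0 < d by apply: leq_ltn_trans ld.
have K_gt0 : 0 < K by rewrite muln_gt0 d_gt0.
have MK : M l <= K by rewrite leq_pmull.
have fast_cap t : t <= size tr -> #|fast_mem l (state d tr t)| <= K.
  move=> t_le; apply: leq_trans (card_fast_mem (ltnW ld) (state_fits exec_tr fits0 t_le) mono) _.
  by rewrite leq_mul2r ltnW ?orbT.
have msg_cap u : u < size tr -> msg_words l (event_at tr u) <= K.
  by move=> lt_u; apply: leq_trans (msg_words_le exec_tr fits0 (ltnW ld) lt_u) MK.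
have bound := mults_suffix_bound chol ld K_gt0 fast_cap msg_cap (leq_trans hh MK) (leq0n _).
apply: (level_arith h_gt0 d_gt0 (m := n %/ 3) (K := K)).
- by move: n_ge3 (leq_divM n 3); lia.
- exact: (card_lower_words chol ld).
- have M4 : M l <= 4 * h ^ 2 by move: Mh h_gt0; nia.
  by rewrite /K mulnC mulnAC leq_mul2r M4 orbT.
- by apply: leq_trans bound; rewrite leq_mul2r (card_mults_total chol) orbT.
Qed.

Local Open Scope R_scope.

Lemma INR_expn a k : INR (a ^ k)%N = INR a ^ k.
Proof. by elim: k => [|k IH]; rewrite ?expn0 // expnS mult_INR IH. Qed.

Lemma sumR_le c (f g : nat -> R) k :
  (forall l, (l < k)%N -> c * g l <= f l) -> c * sumR k g <= sumR k f.
Proof.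
move=> le_fg; rewrite /sumR.
have : all (gtn k) (iota 0 k) by apply/allP => l; rewrite mem_iota.
elim: (iota 0 k) => [_|l r IH /andP[lk rk]] /=; first by rewrite Rmult_0_r; apply: Rle_refl.
by rewrite Rmult_plus_distr_l; apply: Rplus_le_compat; [apply: le_fg | apply: IH].
Qed.

Lemma cost_bounds_of_cube (kappa x s Mr W C beta alpha : R) :
  0 < kappa -> 0 < s -> Mr = s * s -> x <= kappa * s * W -> W <= Mr * C ->
  0 <= beta -> 0 <= alpha ->
  / kappa * (beta * (x / s - Mr)) <= beta * W /\
  / kappa * (alpha * (x / (Mr * s))) <= alpha * C.
Proof.
move=> k0 s0 -> x_le W_le b0 a0.
have ik0 : 0 < / kappa by apply: Rinv_0_lt_compat.
have xs : / kappa * (x / s) <= W.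
  apply: (Rmult_le_reg_l kappa) => //; rewrite -Rmult_assoc Rinv_r ?Rmult_1_l; last by lra.
  by apply: (Rmult_le_reg_r s) => //; rewrite /Rdiv Rmult_assoc Rinv_l ?Rmult_1_r; lra.
split.
- have -> : / kappa * (beta * (x / s - s * s)) =
      beta * (/ kappa * (x / s)) - beta * (/ kappa * (s * s)) by field; lra.
  have : 0 <= beta * (/ kappa * (s * s)) by apply: Rmult_le_pos => //; nra.
  have : beta * (/ kappa * (x / s)) <= beta * W by apply: Rmult_le_compat_l.
  lra.
- have -> : / kappa * (alpha * (x / (s * s * s))) = alpha * (/ kappa * (x / s) / (s * s)).
    by field; lra.
  apply: Rmult_le_compat_l => //.
  apply: (Rmult_le_reg_r (s * s)); first by nra.
  rewrite /Rdiv Rmult_assoc Rinv_l ?Rmult_1_r; nra.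
Qed.

Lemma level_cost_bounds n d M (tr : seq (event n)) (alpha beta : nat -> R) l :
  classical_cholesky d M tr -> (l.+1 < d)%N ->
  {in [pred t | (t < d)%N] &, {homo M : t u / (t <= u)%N}} ->
  (0 < M l)%N -> (3 <= n)%N -> 0 <= alpha l -> 0 <= beta l ->
  / INR (125 * (520 * d ^ 2)) * (beta l * (INR n ^ 3 / sqrt (INR (M l)) - INR (M l)))
    <= beta l * INR (sumn (map (msg_words l) tr)) /\
  / INR (125 * (520 * d ^ 2)) * (alpha l * (INR n ^ 3 / (INR (M l) * sqrt (INR (M l)))))
    <= alpha l * INR (count (is_msg l) tr).
Proof.
move=> chol ld mono Ml_gt0 n_ge3 a0 b0; have [fits0 exec_tr _ _ _] := chol.
have d_gt0 : (0 < d)%N by apply: leq_ltn_trans ld.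
set s := sqrt (INR (M l)); set h := Nat.sqrt (M l).
have s_gt0 : 0 < s by apply/sqrt_lt_R0/lt_0_INR/ltP.
have hs : INR h <= s.
  rewrite -(sqrt_square _ (pos_INR h)) /s; apply: sqrt_le_1_alt; rewrite -mult_INR.
  by apply/le_INR/leP; have [/leP] := Nat.sqrt_spec (M l) (Nat.le_0_l _).
have /leP/le_INR n3 := level_words_bound chol ld mono Ml_gt0 n_ge3.
have /leP/le_INR W_le := words_le_messages exec_tr fits0 (ltnW ld).
rewrite INR_expn mult_INR mult_INR -/h in n3; rewrite mult_INR in W_le.
rewrite sumn_msg_words; apply: cost_bounds_of_cube => //.
- by apply/lt_0_INR/ltP; rewrite !muln_gt0 d_gt0.
- by rewrite /s sqrt_sqrt //; apply: pos_INR.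
- apply: Rle_trans n3 _; apply: Rmult_le_compat_r (pos_INR _) _.
  exact: Rmult_le_compat_l (pos_INR _) hs.
Qed.

Theorem corollary3p4 :
  forall d : nat, (0 < d)%N ->
  exists c : R, 0 < c /\
  exists n0 : nat,
  forall (n : nat) (M : nat -> nat) (alpha beta : nat -> R) (tr : seq (event n)),
    (n0 <= n)%N ->
    (forall l : nat, (l < d)%N -> (0 < M l)%N) ->
    (forall l : nat, (l.+1 < d)%N -> (M l <= M l.+1)%N) ->
    (forall l : nat, (l < d)%N -> 0 <= alpha l /\ 0 <= beta l) ->
    (forall l : nat, (l.+1 < d)%N -> alpha l <= alpha l.+1 /\ beta l <= beta l.+1) ->
    classical_cholesky d M tr ->
    bandwidth_cost d beta tr >=
      c * sumR d.-1 (fun l => beta l * (INR n ^ 3 / sqrt (INR (M l)) - INR (M l))) /\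
    latency_cost d alpha tr >=
      c * sumR d.-1 (fun l => alpha l * (INR n ^ 3 / (INR (M l) * sqrt (INR (M l))))).
Proof.
move=> d d_gt0; exists (/ INR (125 * (520 * d ^ 2))); split.
  by apply/Rinv_0_lt_compat/lt_0_INR/ltP; rewrite !muln_gt0 d_gt0.
exists 3%N => n M alpha beta tr n_ge3 M_gt0 M_step cost_ge0 _ chol.
have mono : {in [pred t | (t < d)%N] &, {homo M : t u / (t <= u)%N}}.
  apply: homo_leq_in => [//|y x z|i j _ jd k /andP[_ kj]|i _ i1].
  - exact: leq_trans.
  - exact: ltn_trans kj jd.
  - exact: M_step.
split; apply: Rle_ge; apply: sumR_le => l l_lt; have ld : (l.+1 < d)%N by lia.
all: have [a0 b0] := cost_ge0 l (ltnW ld).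
all: have [] := level_cost_bounds chol ld mono (M_gt0 l (ltnW ld)) n_ge3 a0 b0.
all: by [].
Qed.
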